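(* \[ \sum_{n=1}^\infty\frac{p(n)}{n^3(3n-2)^2(3n-1)^2(2n-1)\binom{5n}{3n}^2\binom{2n}{n}}=3\pi^2, \] where $p(n)=574277n^6-1347180n^5+1274841n^4-621294n^3+164024n^2-22184n+1200$. *)

From Stdlib Require Import Reals.
From Coquelicot Require Import Coquelicot.
Open Scope R_scope.

Definition p15 (n : R) : R :=
  574277 * n ^ 6 - 1347180 * n ^ 5 + 1274841 * n ^ 4 - 621294 * n ^ 3
  + 164024 * n ^ 2 - 22184 * n + 1200.

(* The n-th summand, n >= 1. Binomial.C is the real binomial coefficient. *)
Definition term15 (n : nat) : R :=
  let x := INR n in
  p15 x / (x ^ 3 * (3 * x - 2) ^ 2 * (3 * x - 1) ^ 2 * (2 * x - 1)
           * (Binomial.C (5 * n) (3 * n)) ^ 2 * Binomial.C (2 * n) n).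

From Stdlib Require Import Reals Lra Lia Factorial.
From Coquelicot Require Import Coquelicot.
Open Scope R_scope.

(* The summand is 18 (F(n,n) + G(n,n+1)) for the WZ pair
     F(n,k) = k! (k+2n)! (3n)! (2n)! n! (4n)! / ((k+3n+1)! (k+4n+1)! (5n)!),   G = F R,
   with a rational certificate R and F(0,k) = 1/(k+1)^2.  Summing the WZ equation
   F(n+1,k) - F(n,k) = G(n,k+1) - G(n,k) over a triangle (Markov's acceleration) turns
   sum_k F(0,k) = zeta(2) into sum_n (F(n,n) + G(n,n+1)), because the boundary terms
   G(n,N) = O(4^-n / N) vanish.  The value zeta(2) = pi^2/6 comes the same way from a simpler
   pair, which gives zeta(2) = 3 sum_{m>=1} 1/(m^2 binom(2m,m)); that is 6 arcsin(1/2)^2, the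
   Maclaurin series of arcsin^2 being determined by the ODE (1 - x^2) y'' - x y' = 2. *)

(* [psum f N = f 0 + ... + f (N - 1)]: one term fewer than Coquelicot's [sum_n f N]. *)
Fixpoint psum (f : nat -> R) (N : nat) : R :=
  match N with O => 0 | S M => psum f M + f M end.

Lemma psum_ext f g N : (forall n, (n < N)%nat -> f n = g n) -> psum f N = psum g N.
Proof.
  induction N as [|N IH]; intros H; simpl; auto.
  rewrite IH by (intros; apply H; lia). rewrite H by lia. reflexivity.
Qed.

Lemma psumB f g N : psum (fun n => f n - g n) N = psum f N - psum g N.
Proof. induction N as [|N IH]; simpl; [ring | rewrite IH; ring]. Qed.

Lemma psumZ c f N : psum (fun n => c * f n) N = c * psum f N.
Proof. induction N as [|N IH]; simpl; [ring | rewrite IH; ring]. Qed.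

Lemma psum_const c N : psum (fun _ => c) N = INR N * c.
Proof. induction N as [|N IH]; simpl psum; [simpl; ring | rewrite IH, S_INR; ring]. Qed.

Lemma psum_le f g N : (forall n, (n < N)%nat -> f n <= g n) -> psum f N <= psum g N.
Proof.
  induction N as [|N IH]; intros H; simpl; [lra|].
  apply Rplus_le_compat; [apply IH; intros; apply H | apply H]; lia.
Qed.

Lemma psum_ge0 f N : (forall n, (n < N)%nat -> 0 <= f n) -> 0 <= psum f N.
Proof.
  intros H. replace 0 with (psum (fun _ => 0) N) by (rewrite psum_const; ring).
  now apply psum_le.
Qed.

Lemma psum_telescope g N : psum (fun k => g (S k) - g k) N = g N - g O.
Proof. induction N as [|N IH]; simpl; [ring | rewrite IH; ring]. Qed.

Lemma psum_geom_le q N : 0 <= q < 1 -> psum (fun n => q ^ n) N <= / (1 - q).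
Proof.
  intros Hq.
  assert (E : psum (fun n => q ^ n) N * (1 - q) = 1 - q ^ N).
  { induction N as [|N IH]; simpl; [ring|]. rewrite Rmult_plus_distr_r, IH. ring. }
  assert (0 <= q ^ N) by (apply pow_le; lra).
  apply Rmult_le_reg_r with (1 - q); [lra|]. rewrite E, Rinv_l by lra. lra.
Qed.

Lemma sum_n_psum (a : nat -> R) N : sum_n a N = psum a (S N).
Proof.
  induction N as [|N IH]; [rewrite sum_O; simpl; ring|].
  rewrite sum_Sn, IH. simpl psum. unfold plus; simpl. ring.
Qed.

Lemma is_series_psum (a : nat -> R) (l : R) :
  is_lim_seq (psum a) l -> is_series a l.
Proof.
  intros H. change (is_lim_seq (sum_n a) l).
  apply is_lim_seq_ext with (fun N => psum a (S N)); [intros; symmetry; apply sum_n_psum|].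
  now apply (is_lim_seq_incr_1 (psum a) l).
Qed.

(** * Markov's WZ acceleration *)

Section WZPair.

Variables F G : nat -> nat -> R.
Hypothesis wz : forall n k, F (S n) k - F n k = G n (S k) - G n k.

Lemma wz_column_sum N M :
  psum (F O) M = psum (fun n => G n O) N + psum (F N) M - psum (fun n => G n M) N.
Proof.
  induction N as [|N IH]; simpl; [ring|]. rewrite IH.
  assert (E : psum (F (S N)) M - psum (F N) M = G N M - G N O).
  { rewrite <- psumB, <- (psum_telescope (G N)). apply psum_ext. intros; apply wz. }
  lra.
Qed.

Lemma wz_diagonal_sum N :
  psum (fun n => F n n + G n (S n)) N = psum (F O) N + psum (fun n => G n N) N.
Proof.
  induction N as [|N IH]; simpl; [ring|]. rewrite IH.
  assert (E : psum (fun n => G n (S N)) N - psum (fun n => G n N) N = F N N - F O N).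
  { rewrite <- psumB, <- (psum_telescope (fun n => F n N)). apply psum_ext.
    intros; now rewrite wz. }
  lra.
Qed.

End WZPair.

Lemma is_lim_seq_inv_succ : is_lim_seq (fun N => / (INR N + 1)) 0.
Proof.
  assert (H : is_lim_seq (fun N => INR N + 1) p_infty).
  { apply is_lim_seq_ext with (fun N => INR (S N)); [intros; apply S_INR|].
    apply (is_lim_seq_incr_1 INR p_infty), is_lim_seq_INR. }
  apply (is_lim_seq_inv _ _ H). discriminate.
Qed.

Lemma is_lim_seq_le_inv_succ (e : nat -> R) C :
  (forall N, 0 <= e N <= C / (INR N + 1)) -> is_lim_seq e 0.
Proof.
  intros H. apply is_lim_seq_le_le with (fun _ => 0) (fun N => C * / (INR N + 1)).
  - apply H.
  - apply is_lim_seq_const.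
  - replace (Finite 0) with (Rbar_mult C 0) by (simpl; f_equal; ring).
    apply is_lim_seq_scal_l, is_lim_seq_inv_succ.
Qed.

Lemma wz_tail_vanishes (G : nat -> nat -> R) C q :
  0 <= C -> 0 <= q < 1 ->
  (forall n N, (n < N)%nat -> 0 <= G n N <= C * q ^ n / (INR N + 1)) ->
  is_lim_seq (fun N => psum (fun n => G n N) N) 0.
Proof.
  intros HC Hq HG. apply is_lim_seq_le_inv_succ with (C / (1 - q)). intros N.
  pose proof (pos_INR N).
  split; [apply psum_ge0; intros; apply HG; lia|].
  apply Rle_trans with (psum (fun n => C / (INR N + 1) * q ^ n) N).
  - apply psum_le. intros n Hn. apply Rle_trans with (1 := proj2 (HG n N Hn)).
    right. field. lra.
  - rewrite psumZ.
    apply Rle_trans with (C / (INR N + 1) * / (1 - q)); [|right; field; lra].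
    apply Rmult_le_compat_l; [|now apply psum_geom_le].
    apply Rmult_le_pos; [lra | apply Rlt_le, Rinv_0_lt_compat; lra].
Qed.

Definition factR (n : nat) : R := INR (fact n).

Lemma factR_pos n : 0 < factR n.
Proof. apply INR_fact_lt_0. Qed.

Lemma factR_0 : factR 0 = 1.
Proof. reflexivity. Qed.

Lemma factR_S n : factR (S n) = (INR n + 1) * factR n.
Proof. unfold factR. change (fact (S n)) with (S n * fact n)%nat. rewrite mult_INR, S_INR. ring. Qed.

Ltac push_INR := repeat rewrite ?factR_S, ?S_INR, ?plus_INR, ?mult_INR, ?INR_0, ?INR_1.

Lemma factR_sq_le n : factR n ^ 2 <= factR (2 * n).
Proof.
  induction n as [|n IH]; [unfold factR; simpl; lra|].
  replace (2 * S n)%nat with (S (S (2 * n))) by lia.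
  rewrite !factR_S, S_INR, mult_INR. change (INR 2) with 2.
  pose proof (pos_INR n).
  apply Rle_trans with ((INR n + 1) ^ 2 * factR (2 * n)).
  - replace (((INR n + 1) * factR n) ^ 2) with ((INR n + 1) ^ 2 * factR n ^ 2) by ring.
    apply Rmult_le_compat_l; [apply pow_le; lra | exact IH].
  - rewrite <- Rmult_assoc. apply Rmult_le_compat_r; [apply Rlt_le, factR_pos | nra].
Qed.

Lemma div_le_l a b c : 0 < c -> a <= b * c -> a / c <= b.
Proof.
  intros Hc H. apply Rmult_le_reg_r with c; auto.
  unfold Rdiv. rewrite Rmult_assoc, Rinv_l by lra. lra.
Qed.

(** * The Maclaurin series of arcsin^2 *)

(* The recurrence is the one forced on the coefficients by
   (1 - x^2) y'' - x y' = 2 with y(0) = y'(0) = 0, satisfied by y = arcsin(x)^2. *)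
Fixpoint asin2_coef (n : nat) : R :=
  match n with
  | O | S O => 0
  | S (S m) => (INR m ^ 2 * asin2_coef m + match m with O => 2 | _ => 0 end)
               / ((INR m + 2) * (INR m + 1))
  end.

Lemma asin2_coef_SS m :
  asin2_coef (S (S m)) = (INR m ^ 2 * asin2_coef m + match m with O => 2 | _ => 0 end)
                         / ((INR m + 2) * (INR m + 1)).
Proof. reflexivity. Qed.

Lemma asin2_coef_bound n : 0 <= asin2_coef n <= 1.
Proof.
  enough (H : 0 <= asin2_coef n <= 1 /\ 0 <= asin2_coef (S n) <= 1) by apply H.
  induction n as [|n [IH1 IH2]]; [simpl; lra|]. split; [exact IH2|].
  rewrite asin2_coef_SS. pose proof (pos_INR n).
  destruct n as [|n]; [simpl; lra|].
  assert (1 <= INR (S n)) by (rewrite S_INR; pose proof (pos_INR n); lra).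
  split.
  - apply Rmult_le_pos; [nra | apply Rlt_le, Rinv_0_lt_compat; nra].
  - apply div_le_l; nra.
Qed.

Lemma asin2_coef_odd m : asin2_coef (2 * m + 1) = 0.
Proof.
  induction m as [|m IH]; [reflexivity|].
  replace (2 * S m + 1)%nat with (S (S (S (2 * m)))) by lia.
  rewrite asin2_coef_SS. change (match S (2 * m) with O => 2 | _ => 0 end) with 0.
  replace (S (2 * m)) with (2 * m + 1)%nat by lia. rewrite IH. unfold Rdiv. ring.
Qed.

Lemma asin2_coef_even m :
  asin2_coef (2 * m + 2) = 2 ^ (2 * m + 1) * factR m ^ 2 / factR (2 * m + 2).
Proof.
  induction m as [|m IH]; [simpl; unfold factR; simpl; field|].
  replace (2 * S m + 2)%nat with (S (S (S (2 * m + 1)))) by lia.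
  rewrite asin2_coef_SS. change (match S (2 * m + 1) with O => 2 | _ => 0 end) with 0.
  replace (S (2 * m + 1)) with (2 * m + 2)%nat by lia. rewrite IH. replace (2 * S m + 1)%nat with (S (S (2 * m + 1))) by lia.
  rewrite <- !tech_pow_Rmult. replace (2 * m + 2)%nat with (S (S (2 * m))) by lia.
  rewrite !factR_S. pose proof (pos_INR m). pose proof (factR_pos m). pose proof (factR_pos (2 * m)).
  assert (0 < 2 ^ (2 * m + 1)) by (apply pow_lt; lra). set (P := 2 ^ (2 * m + 1)) in *.
  push_INR. field. repeat split; lra.
Qed.

Lemma Rbar_lt_radius a x : Rbar_le 1 (CV_radius a) -> Rabs x < 1 -> Rbar_lt (Rabs x) (CV_radius a).
Proof. intros H Hx. apply Rbar_lt_le_trans with 1; [exact Hx | exact H]. Qed.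

Lemma asin2_radius : Rbar_le 1 (CV_radius asin2_coef).
Proof.
  apply (proj1 (CV_radius_bounded asin2_coef)). exists 1. intros n.
  rewrite pow1, Rmult_1_r. pose proof (asin2_coef_bound n). rewrite Rabs_pos_eq; lra.
Qed.

Definition asin2_d1 := PS_derive asin2_coef.
Definition asin2_d2 := PS_derive asin2_d1.

Lemma asin2_d1_radius : Rbar_le 1 (CV_radius asin2_d1).
Proof. unfold asin2_d1. rewrite CV_radius_derive. apply asin2_radius. Qed.

Lemma asin2_d2_radius : Rbar_le 1 (CV_radius asin2_d2).
Proof. unfold asin2_d2. rewrite CV_radius_derive. apply asin2_d1_radius. Qed.

Lemma asin2_ode_coef n :
  PS_minus (PS_minus asin2_d2 (PS_incr_n asin2_d2 2)) (PS_incr_1 asin2_d1) n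
  = match n with O => 2 | _ => 0 end.
Proof.
  unfold PS_minus, asin2_d2, asin2_d1, PS_derive.
  destruct n as [|[|m]]; [simpl; unfold minus, plus, opp, zero; simpl; field ..|].
  cbn [PS_incr_n PS_incr_1]. rewrite (asin2_coef_SS (S (S m))).
  remember (asin2_coef (S (S m))) as A. rewrite !S_INR. unfold minus, plus, opp; simpl.
  pose proof (pos_INR m). field. lra.
Qed.

Lemma asin2_ode x :
  Rabs x < 1 -> (1 - x ^ 2) * PSeries asin2_d2 x - x * PSeries asin2_d1 x = 2.
Proof.
  intros Hx.
  assert (e2 : ex_pseries asin2_d2 x)
    by (apply CV_radius_inside, Rbar_lt_radius; [apply asin2_d2_radius | auto]).
  assert (e1 : ex_pseries asin2_d1 x)
    by (apply CV_radius_inside, Rbar_lt_radius; [apply asin2_d1_radius | auto]).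
  set (c := PS_minus (PS_minus asin2_d2 (PS_incr_n asin2_d2 2)) (PS_incr_1 asin2_d1)).
  assert (ec : ex_pseries c x).
  { apply ex_pseries_minus; [apply ex_pseries_minus|]; auto.
    - now apply ex_pseries_incr_n.
    - now apply ex_pseries_incr_1. }
  assert (E : PSeries c x = (1 - x ^ 2) * PSeries asin2_d2 x - x * PSeries asin2_d1 x).
  { unfold c. rewrite !PSeries_minus, PSeries_incr_n, PSeries_incr_1; try ring; auto.
    - now apply ex_pseries_incr_n.
    - apply ex_pseries_minus; auto. now apply ex_pseries_incr_n.
    - now apply ex_pseries_incr_1. }
  rewrite <- E, (PSeries_ext c _ x asin2_ode_coef), PSeries_decr_1.
  - rewrite (PSeries_ext _ (fun _ => 0)) by reflexivity. rewrite PSeries_const_0. simpl. ring.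
  - apply ex_pseries_ext with c; [apply asin2_ode_coef | exact ec].
Qed.

Lemma Rabs_sin_lt_1 t : -1 < t < 1 -> Rabs (sin t) < 1.
Proof.
  intros Ht. pose proof PI_4. pose proof PI2_3_2.
  destruct (Rtotal_order t 0) as [h|[h|h]].
  - pose proof (sin_gt_x t h). assert (sin t < 0) by (apply sin_lt_0_var; lra).
    rewrite Rabs_left; lra.
  - subst. rewrite sin_0, Rabs_R0. lra.
  - pose proof (sin_lt_x t h). assert (0 < sin t) by (apply sin_gt_0; lra).
    rewrite Rabs_pos_eq; lra.
Qed.

Lemma is_derive_PSeries_sin a t :
  Rbar_le 1 (CV_radius a) -> -1 < t < 1 ->
  is_derive (fun u => PSeries a (sin u)) t (PSeries (PS_derive a) (sin t) * cos t).
Proof.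
  intros Ha Ht. replace (PSeries (PS_derive a) (sin t) * cos t)
    with (scal (cos t) (PSeries (PS_derive a) (sin t))) by (unfold scal; simpl; unfold mult; simpl; ring).
  apply (is_derive_comp (PSeries a) sin); [|apply is_derive_sin].
  apply is_derive_PSeries, Rbar_lt_radius; [exact Ha | now apply Rabs_sin_lt_1].
Qed.

Lemma is_derive_0_const (h : R -> R) :
  (forall t, -1 < t < 1 -> is_derive h t 0) -> forall t, -1 < t < 1 -> h t = h 0.
Proof.
  intros Hd t Ht.
  assert (Hin : forall x, Rmin 0 t <= x <= Rmax 0 t -> -1 < x < 1).
  { intros x Hx. unfold Rmin, Rmax in Hx. destruct (Rle_dec 0 t); lra. }
  destruct (MVT_gen h 0 t (fun _ => 0)) as [c [_ Hc]].
  - intros x Hx. apply Hd, Hin. lra.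
  - intros x Hx. apply continuity_pt_filterlim.
    apply (@ex_derive_continuous R_AbsRing R_NormedModule). exists 0. now apply Hd, Hin.
  - lra.
Qed.

(* Along x = sin u the ODE says that u |-> y'(sin u) cos u has derivative 2. *)
Lemma asin2_d1_sin t : -1 < t < 1 -> PSeries asin2_d1 (sin t) * cos t = 2 * t.
Proof.
  intros Ht.
  assert (Hd : forall u, -1 < u < 1 ->
    is_derive (fun u => PSeries asin2_d1 (sin u) * cos u - 2 * u) u 0).
  { intros u Hu. pose proof (asin2_ode (sin u) (Rabs_sin_lt_1 u Hu)) as Hode.
    pose proof (sin2_cos2 u) as Hpy. unfold Rsqr in Hpy.
    apply (is_derive_ext (fun u => minus (mult (PSeries asin2_d1 (sin u)) (cos u)) (2 * u)));
      [intros; unfold minus, plus, opp, mult; simpl; ring|].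
    evar (d : R). replace 0 with d.
    - apply (@is_derive_minus R_AbsRing R_NormedModule).
      + apply (@is_derive_mult R_AbsRing); [ | apply is_derive_cos | intros; unfold mult; simpl; ring].
        apply is_derive_PSeries_sin; [apply asin2_d1_radius | exact Hu].
      + apply is_derive_scal, (@is_derive_id R_AbsRing).
    - subst d. unfold minus, plus, opp, mult; simpl. simpl in Hode. fold asin2_d2.
      replace (PSeries asin2_d2 (sin u) * cos u * cos u)
        with (PSeries asin2_d2 (sin u) * (1 - sin u * sin u)) by (rewrite <- Hpy; ring).
      change one with 1. lra. }
  pose proof (is_derive_0_const _ Hd t Ht) as H. cbv beta in H.
  assert (E : asin2_d1 0 = 0) by (unfold asin2_d1, PS_derive; simpl; ring).
  rewrite sin_0, cos_0, PSeries_0, E in H. lra.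
Qed.

Lemma asin2_sin t : -1 < t < 1 -> PSeries asin2_coef (sin t) = t ^ 2.
Proof.
  intros Ht.
  assert (Hd : forall u, -1 < u < 1 -> is_derive (fun u => PSeries asin2_coef (sin u) - u ^ 2) u 0).
  { intros u Hu.
    apply (is_derive_ext (fun v => minus (PSeries asin2_coef (sin v)) (v ^ 2)));
      [intros; unfold minus, plus, opp; simpl; ring|].
    replace 0 with (minus (PSeries asin2_d1 (sin u) * cos u) (2 * u))
      by (unfold minus, plus, opp; simpl; rewrite asin2_d1_sin by exact Hu; ring).
    apply (@is_derive_minus R_AbsRing R_NormedModule).
    - apply is_derive_PSeries_sin; [apply asin2_radius | exact Hu].
    - auto_derive; auto; ring. }
  pose proof (is_derive_0_const _ Hd t Ht) as H. cbv beta in H.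
  rewrite sin_0, PSeries_0 in H. simpl in H. lra.
Qed.

Lemma asin2_half : PSeries asin2_coef (1 / 2) = (PI / 6) ^ 2.
Proof. rewrite <- sin_PI6. apply asin2_sin. pose proof PI_4. pose proof PI_RGT_0. lra. Qed.

Lemma asin2_half_even_sums :
  is_lim_seq (fun N => psum (fun n => asin2_coef (2 * n + 2) * (1 / 2) ^ (2 * n + 2)) N)
             ((PI / 6) ^ 2).
Proof.
  set (b j := asin2_coef j * (1 / 2) ^ j).
  assert (Hs : is_lim_seq (fun N => psum b (S N)) ((PI / 6) ^ 2)).
  { rewrite <- asin2_half.
    apply is_lim_seq_ext with (sum_n b); [intros; apply sum_n_psum|].
    apply (is_series_ext (fun k => scal (pow_n (1 / 2) k) (asin2_coef k)));
      [intros; unfold b; rewrite pow_n_pow; unfold scal; simpl; unfold mult; simpl; ring|].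
    apply PSeries_correct, CV_radius_inside, Rbar_lt_radius; [apply asin2_radius|].
    rewrite Rabs_pos_eq; lra. }
  apply is_lim_seq_subseq with (phi := fun N => (2 * N + 1)%nat) in Hs;
    [|apply eventually_subseq; intros; lia].
  apply is_lim_seq_ext with (2 := Hs). intros N.
  replace (S (2 * N + 1)) with (2 * N + 2)%nat by lia.
  induction N as [|N IH]; [unfold b; simpl; ring|].
  replace (2 * S N + 2)%nat with (S (S (2 * N + 2))) by lia. cbn [psum]. rewrite IH.
  unfold b. replace (S (2 * N + 2)) with (2 * (N + 1) + 1)%nat by lia.
  rewrite asin2_coef_odd. ring.
Qed.

Ltac mono_prod :=
  match goal with
  | |- ?a * ?b <= ?c * ?d =>
      apply Rmult_le_compat; [repeat apply Rmult_le_pos; lra .. | mono_prod | mono_prod]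
  | _ => lra
  end.

(** * zeta(2) = pi^2/6 *)

Definition basel_F (n k : nat) : R :=
  factR n ^ 4 * factR k ^ 2 / (factR (2 * n) * factR (n + k + 1) ^ 2).

Definition basel_G (n k : nat) : R :=
  basel_F n k * (2 * INR k + 3 * INR n + 3) / (2 * (2 * INR n + 1)).

Lemma basel_F_pos n k : 0 < basel_F n k.
Proof.
  unfold basel_F. pose proof (factR_pos n). pose proof (factR_pos k).
  pose proof (factR_pos (2 * n)). pose proof (factR_pos (n + k + 1)).
  apply Rdiv_lt_0_compat; apply Rmult_lt_0_compat; auto; apply pow_lt; auto.
Qed.

Lemma basel_F_Sn n k :
  basel_F (S n) k
  = basel_F n k * ((INR n + 1) ^ 4 / ((2 * INR n + 1) * (2 * INR n + 2) * (INR n + INR k + 2) ^ 2)).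
Proof.
  unfold basel_F.
  replace (S n + k + 1)%nat with (S (n + k + 1)) by lia.
  replace (2 * S n)%nat with (S (S (2 * n))) by lia.
  pose proof (pos_INR n). pose proof (pos_INR k). pose proof (factR_pos k). pose proof (factR_pos n).
  pose proof (factR_pos (2 * n)). pose proof (factR_pos (n + k + 1)).
  push_INR. field. repeat split; lra.
Qed.

Lemma basel_F_Sk n k :
  basel_F n (S k) = basel_F n k * ((INR k + 1) ^ 2 / (INR n + INR k + 2) ^ 2).
Proof.
  unfold basel_F. replace (n + S k + 1)%nat with (S (n + k + 1)) by lia.
  pose proof (pos_INR n). pose proof (pos_INR k). pose proof (factR_pos k). pose proof (factR_pos n).
  pose proof (factR_pos (2 * n)). pose proof (factR_pos (n + k + 1)).
  push_INR. field. repeat split; lra.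
Qed.

Lemma basel_wz n k : basel_F (S n) k - basel_F n k = basel_G n (S k) - basel_G n k.
Proof.
  unfold basel_G. rewrite basel_F_Sn, basel_F_Sk, S_INR.
  pose proof (pos_INR n). pose proof (pos_INR k). field. repeat split; lra.
Qed.

Lemma basel_F0 k : basel_F 0 k = / (INR k + 1) ^ 2.
Proof.
  unfold basel_F. replace (0 + k + 1)%nat with (S k) by lia. simpl (2 * 0)%nat.
  rewrite factR_S, factR_0. pose proof (factR_pos k). pose proof (pos_INR k). field. lra.
Qed.

Lemma basel_F_le_geom n k : basel_F n k <= (/ 2) ^ n * basel_F 0 k.
Proof.
  induction n as [|n IH]; [simpl; lra|].
  rewrite basel_F_Sn. change ((/ 2) ^ S n) with (/ 2 * (/ 2) ^ n).
  pose proof (pos_INR n). pose proof (pos_INR k). pose proof (basel_F_pos n k).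
  assert (Hr : (INR n + 1) ^ 4 / ((2 * INR n + 1) * (2 * INR n + 2) * (INR n + INR k + 2) ^ 2) <= / 2).
  { apply div_le_l; [repeat apply Rmult_lt_0_compat; try lra; apply pow_lt; lra|].
    assert ((INR n + 1) * (2 * INR n + 2) * (INR n + 1) * (INR n + 1)
            <= (2 * INR n + 1) * (2 * INR n + 2) * (INR n + INR k + 2) * (INR n + INR k + 2))
      by mono_prod.
    lra. }
  pose proof (Rmult_le_compat_l _ _ _ (Rlt_le _ _ (basel_F_pos n k)) Hr).
  pose proof (basel_F_pos 0 k). nra.
Qed.

Lemma basel_F_diag_le N k : basel_F N k <= / (INR N + 1) ^ 2.
Proof.
  pose proof (pos_INR N). induction k as [|k IH].
  - unfold basel_F. replace (N + 0 + 1)%nat with (S N) by lia.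
    rewrite factR_S, factR_0. pose proof (factR_sq_le N). pose proof (factR_pos N).
    apply div_le_l; [apply Rmult_lt_0_compat; [apply factR_pos | apply pow_lt; nra]|].
    apply Rle_trans with (factR (2 * N) * factR N ^ 2); [|right; field; lra].
    replace (factR N ^ 4 * 1 ^ 2) with (factR N ^ 2 * factR N ^ 2) by ring.
    apply Rmult_le_compat_r; [apply pow_le|]; lra.
  - rewrite basel_F_Sk. pose proof (pos_INR k). pose proof (basel_F_pos N k).
    assert (Hr : (INR k + 1) ^ 2 / (INR N + INR k + 2) ^ 2 <= 1)
      by (apply div_le_l; [apply pow_lt|]; nra).
    pose proof (Rmult_le_compat_l _ _ _ (Rlt_le _ _ (basel_F_pos N k)) Hr). lra.
Qed.

Lemma basel_G_bound n N :
  (n < N)%nat -> 0 <= basel_G n N <= 3 * (/ 2) ^ n / (INR N + 1).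
Proof.
  intros Hn. unfold basel_G. pose proof (basel_F_le_geom n N). rewrite basel_F0 in H. pose proof (basel_F_pos n N).
  pose proof (pos_INR n). pose proof (pos_INR N).
  assert (INR n <= INR N) by (apply le_INR; lia).
  assert (0 < (/ 2) ^ n) by (apply pow_lt; lra).
  split; [apply Rmult_le_pos; [nra | apply Rlt_le, Rinv_0_lt_compat; lra]|].
  apply div_le_l; [lra|].
  apply Rle_trans with ((/ 2) ^ n * / (INR N + 1) ^ 2 * (6 * (INR N + 1))).
  - apply Rmult_le_compat; lra.
  - apply Rle_trans with (6 * ((/ 2) ^ n / (INR N + 1)) * (2 * INR n + 1)); [|right; field; lra].
    replace ((/ 2) ^ n * / (INR N + 1) ^ 2 * (6 * (INR N + 1)))
      with (6 * ((/ 2) ^ n / (INR N + 1))) by (field; lra).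
    assert (0 <= (/ 2) ^ n / (INR N + 1)) by (apply Rmult_le_pos; [lra | apply Rlt_le, Rinv_0_lt_compat; lra]).
    nra.
Qed.

Lemma basel_G_asin2 n : basel_G n 0 = 6 * (asin2_coef (2 * n + 2) * (1 / 2) ^ (2 * n + 2)).
Proof.
  rewrite asin2_coef_even. unfold basel_G, basel_F.
  replace (n + 0 + 1)%nat with (S n) by lia.
  replace (1 / 2) with (/ 2) by field. rewrite pow_inv.
  replace (2 * n + 2)%nat with (S (2 * n + 1)) by lia. rewrite <- (tech_pow_Rmult 2 (2 * n + 1)).
  replace (S (2 * n + 1)) with (S (S (2 * n))) by lia.
  rewrite !factR_S, factR_0. pose proof (pos_INR n). pose proof (factR_pos n). pose proof (factR_pos (2 * n)).
  assert (0 < 2 ^ (2 * n + 1)) by (apply pow_lt; lra). set (P := 2 ^ (2 * n + 1)) in *.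
  push_INR. field. repeat split; lra.
Qed.

Lemma basel : is_lim_seq (psum (fun k => / (INR k + 1) ^ 2)) (PI ^ 2 / 6).
Proof.
  apply is_lim_seq_ext with (fun N => psum (fun n => basel_G n 0) N
                                      + (psum (basel_F N) N - psum (fun n => basel_G n N) N)).
  { intros N. rewrite <- (psum_ext (basel_F 0) (fun k => / (INR k + 1) ^ 2))
      by (intros; apply basel_F0).
    rewrite (wz_column_sum basel_F basel_G basel_wz N N). ring. }
  replace (PI ^ 2 / 6) with (6 * (PI / 6) ^ 2 + (0 - 0)) by field.
  apply is_lim_seq_plus', is_lim_seq_minus'.
  - apply is_lim_seq_ext with (fun N => 6 * psum (fun n => asin2_coef (2 * n + 2) * (1 / 2) ^ (2 * n + 2)) N).
    + intros N. rewrite <- psumZ. apply psum_ext. intros. symmetry. apply basel_G_asin2.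
    + apply (is_lim_seq_scal_l _ 6 (Finite _)), asin2_half_even_sums.
  - apply is_lim_seq_le_inv_succ with 1. intros N. pose proof (pos_INR N).
    split; [apply psum_ge0; intros; apply Rlt_le, basel_F_pos|].
    apply Rle_trans with (psum (fun _ => / (INR N + 1) ^ 2) N);
      [apply psum_le; intros; apply basel_F_diag_le|].
    rewrite psum_const. apply Rle_trans with ((INR N + 1) * / (INR N + 1) ^ 2).
    + apply Rmult_le_compat_r; [apply Rlt_le, Rinv_0_lt_compat, pow_lt|]; lra.
    + right. field. lra.
  - apply (wz_tail_vanishes basel_G 3 (/ 2)); [lra | lra | apply basel_G_bound].
Qed.

(** * The WZ pair behind the series *)

Definition wz_norm (n : nat) : R :=
  factR (3 * n) * factR (2 * n) * factR n * factR (4 * n) / factR (5 * n).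

Definition wz_F (n k : nat) : R :=
  factR k * factR (k + 2 * n) / (factR (k + 3 * n + 1) * factR (k + 4 * n + 1)) * wz_norm n.

Definition wz_ratio_k (x y : R) : R :=
  (y + 1) * (y + 2 * x + 1) / ((y + 3 * x + 2) * (y + 4 * x + 2)).

Definition wz_ratio_n (x y : R) : R :=
  (y + 2 * x + 1) * (y + 2 * x + 2)
  * ((3 * x + 1) * (3 * x + 2) * (3 * x + 3) * (2 * x + 1) * (2 * x + 2) * (x + 1)
     * (4 * x + 1) * (4 * x + 2) * (4 * x + 3) * (4 * x + 4))
  / ((5 * x + 1) * (5 * x + 2) * (5 * x + 3) * (5 * x + 4) * (5 * x + 5)
     * ((y + 3 * x + 2) * (y + 3 * x + 3) * (y + 3 * x + 4)
        * (y + 4 * x + 2) * (y + 4 * x + 3) * (y + 4 * x + 4) * (y + 4 * x + 5))).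

(* The certificate R of the pair, produced by Gosper's algorithm. *)
Definition wz_cert_num (x y : R) : R :=
  ((28392 + 439444 * x + 2950680 * x ^ 2 + 11304060 * x ^ 3 + 27274956 * x ^ 4 + 43044672 * x ^ 5 + 44486820 * x ^ 6 + 29065040 * x ^ 7 + 10903152 * x ^ 8 + 1790784 * x ^ 9)
   + (69748 + 947146 * x + 5509279 * x ^ 2 + 17953901 * x ^ 3 + 35896633 * x ^ 4 + 45138209 * x ^ 5 + 34893756 * x ^ 6 + 15174784 * x ^ 7 + 2844624 * x ^ 8) * y
   + (71836 + 845409 * x + 4182806 * x ^ 2 + 11291179 * x ^ 3 + 17977879 * x ^ 4 + 16898806 * x ^ 5 + 8690129 * x ^ 6 + 1887436 * x ^ 7) * y ^ 2
   + (39080 + 392825 * x + 1614655 * x ^ 2 + 3478510 * x ^ 3 + 4147085 * x ^ 4 + 2596710 * x ^ 5 + 667735 * x ^ 6) * y ^ 3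
   + (11780 + 99265 * x + 327735 * x ^ 2 + 531215 * x ^ 3 + 423430 * x ^ 4 + 132975 * x ^ 5) * y ^ 4
   + (1860 + 12805 * x + 32180 * x ^ 2 + 35150 * x ^ 3 + 14125 * x ^ 4) * y ^ 5
   + (120 + 650 * x + 1125 * x ^ 2 + 625 * x ^ 3) * y ^ 6) / 5.

Definition wz_cert_den (x y : R) : R :=
  (5 * x + 1) * (5 * x + 2) * (5 * x + 3) * (5 * x + 4)
  * ((y + 3 * x + 2) * (y + 3 * x + 3) * (y + 4 * x + 2) * (y + 4 * x + 3) * (y + 4 * x + 4)).

Definition wz_cert (x y : R) : R := wz_cert_num x y / wz_cert_den x y.

Definition wz_G (n k : nat) : R := wz_F n k * wz_cert (INR n) (INR k).

Lemma wz_F_pos n k : 0 < wz_F n k.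
Proof.
  unfold wz_F, wz_norm.
  repeat match goal with
  | |- 0 < _ * _ => apply Rmult_lt_0_compat
  | |- 0 < _ / _ => apply Rdiv_lt_0_compat
  | |- 0 < factR _ => apply factR_pos
  end.
Qed.

Lemma wz_F_Sk n k : wz_F n (S k) = wz_F n k * wz_ratio_k (INR n) (INR k).
Proof.
  unfold wz_F, wz_ratio_k, wz_norm.
  replace (S k + 2 * n)%nat with (S (k + 2 * n)) by lia.
  replace (S k + 3 * n + 1)%nat with (S (k + 3 * n + 1)) by lia.
  replace (S k + 4 * n + 1)%nat with (S (k + 4 * n + 1)) by lia.
  pose proof (pos_INR n). pose proof (pos_INR k).
  pose proof (factR_pos k). pose proof (factR_pos (k + 2 * n)). pose proof (factR_pos (5 * n)).
  pose proof (factR_pos (k + 3 * n + 1)). pose proof (factR_pos (k + 4 * n + 1)).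
  push_INR. field. repeat split; lra.
Qed.

Lemma wz_F_Sn n k : wz_F (S n) k = wz_F n k * wz_ratio_n (INR n) (INR k).
Proof.
  unfold wz_F, wz_norm, wz_ratio_n.
  replace (k + 2 * S n)%nat with (S (S (k + 2 * n))) by lia.
  replace (k + 3 * S n + 1)%nat with (S (S (S (k + 3 * n + 1)))) by lia.
  replace (k + 4 * S n + 1)%nat with (S (S (S (S (k + 4 * n + 1))))) by lia.
  replace (2 * S n)%nat with (S (S (2 * n))) by lia.
  replace (3 * S n)%nat with (S (S (S (3 * n)))) by lia.
  replace (4 * S n)%nat with (S (S (S (S (4 * n))))) by lia.
  replace (5 * S n)%nat with (S (S (S (S (S (5 * n)))))) by lia.
  pose proof (pos_INR n). pose proof (pos_INR k).
  pose proof (factR_pos k). pose proof (factR_pos (k + 2 * n)).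
  pose proof (factR_pos (k + 3 * n + 1)). pose proof (factR_pos (k + 4 * n + 1)).
  pose proof (factR_pos n). pose proof (factR_pos (2 * n)). pose proof (factR_pos (3 * n)).
  pose proof (factR_pos (4 * n)). pose proof (factR_pos (5 * n)).
  push_INR. field. repeat split; lra.
Qed.

Lemma wz_cert_identity x y :
  0 <= x -> 0 <= y ->
  wz_ratio_n x y - 1 = wz_ratio_k x y * wz_cert x (y + 1) - wz_cert x y.
Proof.
  intros. unfold wz_ratio_n, wz_ratio_k, wz_cert, wz_cert_den, wz_cert_num.
  field. repeat split; lra.
Qed.

Lemma wz_pair n k : wz_F (S n) k - wz_F n k = wz_G n (S k) - wz_G n k.
Proof.
  unfold wz_G. rewrite wz_F_Sn, wz_F_Sk, S_INR.
  pose proof (pos_INR n). pose proof (pos_INR k).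
  transitivity (wz_F n k * (wz_ratio_n (INR n) (INR k) - 1)); [ring|].
  rewrite wz_cert_identity by lra. ring.
Qed.

Lemma wz_F0 k : wz_F 0 k = / (INR k + 1) ^ 2.
Proof.
  unfold wz_F, wz_norm. rewrite !Nat.mul_0_r, !Nat.add_0_r. rewrite Nat.add_1_r, factR_S, !factR_0.
  pose proof (factR_pos k). pose proof (pos_INR k). field. lra.
Qed.

Lemma wz_ratio_n_le x y : 0 <= x -> 0 <= y -> wz_ratio_n x y <= / 4.
Proof.
  intros. unfold wz_ratio_n. apply div_le_l; [repeat apply Rmult_lt_0_compat; lra|].
  assert ((3*x+1)*(3*x+2)*(3*x+3)*(4*x+1)*(4*x+2)*(y+2*x+1)*(y+2*x+2)*(2*x+1)*(2*x+2)*(4*x+4)*(4*x+3)*(4*x+4)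
    <= (5*x+1)*(5*x+2)*(5*x+3)*(5*x+4)*(5*x+5)*(y+3*x+2)*(y+3*x+3)*(y+3*x+4)*(y+4*x+2)*(y+4*x+4)*(y+4*x+3)*(y+4*x+5))
    by mono_prod.
  nra.
Qed.

Lemma wz_F_le_geom n k : wz_F n k <= (/ 4) ^ n * wz_F 0 k.
Proof.
  induction n as [|n IH]; [simpl; lra|]. rewrite wz_F_Sn. simpl.
  pose proof (wz_ratio_n_le (INR n) (INR k) (pos_INR n) (pos_INR k)).
  pose proof (Rmult_le_compat_l _ _ _ (Rlt_le _ _ (wz_F_pos n k)) H).
  pose proof (wz_F_pos 0 k). nra.
Qed.

Ltac nonneg_poly :=
  unfold Rdiv;
  repeat (apply Rplus_le_le_0_compat || apply Rmult_le_pos || apply pow_le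
          || (apply Rlt_le; apply Rinv_0_lt_compat));
  try lra.

Definition wz_cert_slack (x y : R) : R :=
  (6168 + 156716 * x + 1402920 * x ^ 2 + 6541140 * x ^ 3 + 18266484 * x ^ 4 + 32333568 * x ^ 5 + 36693180 * x ^ 6 + 25924960 * x ^ 7 + 10396848 * x ^ 8 + 1809216 * x ^ 9)
  + (31052 + 695654 * x + 5681361 * x ^ 2 + 24321279 * x ^ 3 + 62298147 * x ^ 4 + 100722531 * x ^ 5 + 103738744 * x ^ 6 + 65965216 * x ^ 7 + 23555376 * x ^ 8 + 3600000 * x ^ 9) * y
  + (44324 + 919711 * x + 6800214 * x ^ 2 + 25777951 * x ^ 3 + 56886711 * x ^ 4 + 76239944 * x ^ 5 + 61243621 * x ^ 6 + 27137564 * x ^ 7 + 5100000 * x ^ 8) * y ^ 2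
  + (29320 + 566395 * x + 3738535 * x ^ 2 + 12204390 * x ^ 3 + 22186665 * x ^ 4 + 22928290 * x ^ 5 + 12619765 * x ^ 6 + 2875000 * x ^ 7) * y ^ 3
  + (10060 + 180795 * x + 1046975 * x ^ 2 + 2845035 * x ^ 3 + 4011570 * x ^ 4 + 2848275 * x ^ 5 + 806250 * x ^ 6) * y ^ 4
  + (1740 + 29015 * x + 144070 * x ^ 2 + 309850 * x ^ 3 + 304625 * x ^ 4 + 112500 * x ^ 5) * y ^ 5
  + (120 + 1850 * x + 7625 * x ^ 2 + 11875 * x ^ 3 + 6250 * x ^ 4) * y ^ 6.

Lemma wz_cert_gap x y :
  2 * (y + 1) * wz_cert_den x y - wz_cert_num x y = wz_cert_slack x y / 5.
Proof. unfold wz_cert_den, wz_cert_num, wz_cert_slack. field. Qed.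

Lemma wz_cert_bounds x y : 0 <= x -> 0 <= y -> 0 <= wz_cert x y <= 2 * (y + 1).
Proof.
  intros. assert (Hd : 0 < wz_cert_den x y)
    by (unfold wz_cert_den; repeat apply Rmult_lt_0_compat; lra).
  assert (0 <= wz_cert_num x y) by (unfold wz_cert_num; nonneg_poly).
  assert (0 <= wz_cert_slack x y) by (unfold wz_cert_slack; nonneg_poly).
  pose proof (wz_cert_gap x y). unfold wz_cert. split.
  - apply Rmult_le_pos; [lra | apply Rlt_le, Rinv_0_lt_compat, Hd].
  - apply div_le_l; lra.
Qed.

Lemma wz_G_bound n N : 0 <= wz_G n N <= 2 * (/ 4) ^ n / (INR N + 1).
Proof.
  unfold wz_G. pose proof (wz_cert_bounds (INR n) (INR N) (pos_INR n) (pos_INR N)).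
  pose proof (wz_F_pos n N). pose proof (wz_F_le_geom n N). rewrite wz_F0 in H1.
  pose proof (pos_INR N). split; [nra|].
  apply Rle_trans with ((/ 4) ^ n * / (INR N + 1) ^ 2 * (2 * (INR N + 1))).
  - apply Rmult_le_compat; lra.
  - right. field. lra.
Qed.

Lemma term15_wz n : term15 (S n) = 18 * (wz_F n n + wz_G n (S n)).
Proof.
  unfold wz_G. rewrite wz_F_Sk.
  unfold term15, Binomial.C, wz_F, wz_norm, wz_ratio_k, wz_cert, wz_cert_num, wz_cert_den, p15.
  cbv zeta.
  replace (5 * S n - 3 * S n)%nat with (S (S (2 * n))) by lia.
  replace (2 * S n - S n)%nat with (S n) by lia.
  replace (5 * S n)%nat with (S (S (S (S (S (5 * n)))))) by lia.
  replace (3 * S n)%nat with (S (S (S (3 * n)))) by lia.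
  replace (2 * S n)%nat with (S (S (2 * n))) by lia.
  replace (n + 2 * n)%nat with (3 * n)%nat by lia.
  replace (n + 3 * n + 1)%nat with (S (4 * n)) by lia.
  replace (n + 4 * n + 1)%nat with (S (5 * n)) by lia.
  repeat match goal with |- context [INR (fact ?m)] => fold (factR m) end.
  pose proof (pos_INR n). pose proof (factR_pos n). pose proof (factR_pos (2 * n)).
  pose proof (factR_pos (3 * n)). pose proof (factR_pos (4 * n)). pose proof (factR_pos (5 * n)).
  push_INR. field. repeat split; lra.
Qed.

Lemma wz_diagonal_limit :
  is_lim_seq (psum (fun n => wz_F n n + wz_G n (S n))) (PI ^ 2 / 6).
Proof.
  apply is_lim_seq_ext with (fun N => psum (fun k => / (INR k + 1) ^ 2) N + psum (fun n => wz_G n N) N).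
  { intros N. rewrite (wz_diagonal_sum wz_F wz_G wz_pair N).
    f_equal. apply psum_ext. intros. symmetry. apply wz_F0. }
  replace (PI ^ 2 / 6) with (PI ^ 2 / 6 + 0) by ring.
  apply is_lim_seq_plus'; [apply basel|].
  apply (wz_tail_vanishes wz_G 2 (/ 4)); [lra | lra | intros; apply wz_G_bound].
Qed.

Theorem mainTheorem15 :
  is_series (fun k : nat => term15 (S k)) (3 * PI ^ 2).
Proof.
  apply is_series_psum.
  apply is_lim_seq_ext with (fun N => 18 * psum (fun n => wz_F n n + wz_G n (S n)) N).
  - intros N. rewrite <- psumZ. apply psum_ext. intros. symmetry. apply term15_wz.
  - replace (Finite (3 * PI ^ 2)) with (Rbar_mult 18 (PI ^ 2 / 6)) by (simpl; f_equal; field).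
    apply is_lim_seq_scal_l, wz_diagonal_limit.
Qed.
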